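(* Fix an integer $L\ge 1$ and a real $r\in[0,\frac{L}{L+1})$. There exist an integer $N=N(r,L)$ and a function $g:\mathbb{N}\to[0,\infty)$ with $g(n)\to0$ as $n\to\infty$ such that for every integer $q\ge \max\{2,L\}$ and every $n\ge N$ with $rn\in\mathbb{N}$, every $(r,L)$ list-decodable code $C\subseteq[q]^n$ has $$|C|\le (1+g(n))\,q^{\,n-\lfloor\frac{L+1}{L}rn\rfloor}.$$
   Context: $[q]=\{1,\dots,q\}$. A code is a subset $C\subseteq[q]^n$. The Hamming distance $d(x,y)$ is the number of coordinates where $x,y$ differ, and $B_t(v)$ is the Hamming ball of radius $t$ around $v$ in $[q]^n$. A code $C$ is $(r,L)$ list-decodable if $|B_{rn}(v)\cap C|\le L$ for all $v\in[q]^n$. *)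

From mathcomp Require Import all_boot.
From Stdlib Require Import Reals.
Set Implicit Arguments. Unset Strict Implicit. Unset Printing Implicit Defensive.

Definition word (q n : nat) := {ffun 'I_n -> 'I_q}.

Definition hamming (q n : nat) (x y : word q n) : nat :=
  #|[set i : 'I_n | x i != y i]|.

Definition hball (q n : nat) (t : R) (v : word q n) : {set word q n} :=
  [set w : word q n | if Rle_dec (INR (hamming v w)) t then true else false].

Definition list_decodable (q n : nat) (r : R) (L : nat) (C : {set word q n}) : Prop :=
  forall v : word q n, #|hball (r * INR n)%R v :&: C| <= L.

(* Put t = rn and k = floor((L+1)t/L), choose disjoint coordinate sets E with |E| = t and
   R with |R| = h = k+1-t, and group the codewords by their restriction to the remaining
   n-k-1 coordinates.  Within a class, if a codeword c had L other codewords whose total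
   number of agreements with c on R were at least L, their total number of disagreements
   with c on R would be at most Lh - L <= t; a centre equal to c off E and copying each of
   them on its own block of E would then lie within distance t of all L+1 of them.  So
   every codeword agrees with the others in fewer than L coordinates of R altogether.  As
   at most q codewords of a class have a symbol of their own at a given coordinate,
   summing over R gives h|X| <= hq + (L-1)|X| for every class X.  Summing over the
   q^(n-k-1) classes, |C| <= q^(n-k) h/(h-L+1), and Lh > t turns the factor into
   1 + O(L^2/(rn)). *)

From mathcomp Require Import all_boot zify.
From Stdlib Require Import Reals ZArith Lra Lia.
(* Reals rebinds [^] on nat to [Nat.pow]; restore [expn]. *)
Import ssrnat.
Set Implicit Arguments. Unset Strict Implicit. Unset Printing Implicit Defensive.

Lemma exists_subset_card (T : finType) (A : {set T}) k :
  k <= #|A| -> exists2 B : {set T}, B \subset A & #|B| = k.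
Proof.
rewrite -bin_gt0 -cards_draws => /card_gt0P[B].
by rewrite inE => /andP[BA /eqP kB]; exists B.
Qed.

Lemma exists_subset_sum_ge (T : finType) (A : {set T}) (F : T -> nat) k :
  k <= #|A| -> k <= \sum_(x in A) F x ->
  exists2 S : {set T}, S \subset A & #|S| = k /\ k <= \sum_(x in S) F x.
Proof.
move=> kA kF; set P := [set x in A | 0 < F x].
have PA : P \subset A by apply/subsetP => x; rewrite inE => /andP[].
have [kP | Pk] := leqP k #|P|.
  have [S SP kS] := exists_subset_card kP.
  exists S; first exact: subset_trans SP PA.
  split=> //; rewrite -{1}kS -sum1_card; apply: leq_sum => x /(subsetP SP).
  by rewrite inE => /andP[].
have [B BAP kB] : exists2 B : {set T}, B \subset A :\: P & #|B| = k - #|P|.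
  by apply: exists_subset_card; rewrite cardsD (setIidPr PA); lia.
have PB : [disjoint P & B].
  by rewrite disjoint_sym disjoints_subset (subset_trans BAP) // setDE subsetIr.
have SA : P :|: B \subset A by rewrite subUset PA (subset_trans BAP) ?subsetDl.
exists (P :|: B) => //.
split; first by rewrite cardsU (disjoint_setI0 PB) cards0 kB; lia.
apply: leq_trans kF _.
rewrite (big_setID (P :|: B)) /= (setIidPr SA) [X in _ + X]big1 ?addn0 //.
move=> x; rewrite !inE negb_or => /andP[/andP[xP _] xA].
by apply/eqP; move: xP; rewrite xA /= -leqNgt leqn0.
Qed.

Lemma sum_nat_bool_card (T : finType) (A : {set T}) (P : pred T) :
  \sum_(x in A) P x = #|[set x in A | P x]|.
Proof. by rewrite -sum1dep_card big_mkcondr; apply: eq_bigr => x _; case: (P x). Qed.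

Section Words.
Variables q n : nat.
Implicit Types (x y c : word q n) (E : {set 'I_n}).

Lemma hamming_split E x y :
  hamming x y = #|[set i in E | x i != y i]| + #|[set i in ~: E | x i != y i]|.
Proof.
rewrite /hamming -(cardsID E [set i | x i != y i]).
by congr (_ + _); apply: eq_card => i; rewrite !inE andbC.
Qed.

Lemma exists_center E c (f : word q n -> nat) (s : seq (word q n)) :
  \sum_(y <- s) f y <= #|E| ->
  exists2 v : word q n, {in ~: E, v =1 c} &
    {in s, forall y, #|[set i in E | v i != y i]| + f y <= #|E|}.
Proof.
elim: s E => [|y s IHs] E; first by exists c.
rewrite big_cons => sum_le.
have [D DE Dy] := exists_subset_card (leq_trans (leq_addr _ _) sum_le).
have cardED : #|E :\: D| = #|E| - f y by rewrite cardsD (setIidPr DE) Dy.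
have [|v' v'c v'S] := IHs (E :\: D); first by rewrite cardED; lia.
pose v : word q n := [ffun i => if i \in D then y i else v' i].
have fyE : f y <= #|E| by lia.
exists v.
  move=> i; rewrite !inE ffunE => iE.
  by rewrite (negbTE (contra (subsetP DE i) iE)) v'c // !inE negb_and iE orbT.
move=> y'; rewrite inE => /predU1P[->|y's].
  suff: #|[set i in E | v i != y i]| <= #|E :\: D| by rewrite cardED; lia.
  apply/subset_leq_card/subsetP => i; rewrite !inE ffunE.
  by case: (i \in D) => /=; [rewrite eqxx andbF | case/andP => ->].
have sub : [set i in E | v i != y' i] \subset D :|: [set i in E :\: D | v' i != y' i].
  by apply/subsetP => i; rewrite !inE ffunE; case: (i \in D).
have := v'S y' y's; rewrite cardED => v'y'.
have := leq_trans (subset_leq_card sub) (leq_card_setU _ _).1; rewrite Dy => vy'.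
apply: leq_trans (leq_add vy' (leqnn _)) _.
by rewrite -addnA -(subnKC fyE) leq_add2l.
Qed.

Definition list_decodable_nat (t L : nat) (C : {set word q n}) :=
  forall v : word q n, #|[set w in C | hamming v w <= t]| <= L.

Lemma list_decodable_nat_radius (r : R) t L (C : {set word q n}) :
  INR t = (r * INR n)%R -> list_decodable r L C -> list_decodable_nat t L C.
Proof.
move=> rt C_ld v; apply: leq_trans (C_ld v); apply/subset_leq_card/subsetP => w.
rewrite !inE => /andP[wC vw]; rewrite wC andbT -rt.
by case: Rle_dec => // -[]; apply: le_INR; apply/leP.
Qed.

Lemma card_le_alphabet_collisions (X : {set word q n}) (j : 'I_n) :
  #|X| <= q + \sum_(c in X) \sum_(b in X :\ c) (b j == c j).
Proof.
set T := [set c in X | [exists b in X :\ c, b j == c j]].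
rewrite -(cardsID T X) addnC leq_add //.
  have inj : {in X :\: T &, injective (fun c : word q n => c j)}.
    move=> c1 c2; rewrite !inE => /andP[c1T c1X] /andP[_ c2X] e; apply/eqP.
    apply: contraR c1T => ne; rewrite c1X /=; apply/existsP; exists c2.
    by rewrite !inE eq_sym ne c2X e eqxx.
  by have := leq_card_in _ _ inj; rewrite card_ord.
have -> : X :&: T = T by apply/setIidPr/subsetP => c; rewrite inE => /andP[].
rewrite -sum_nat_bool_card; apply: leq_sum => c _.
by case: existsP => [[b /andP[bXc e]]|_] //; rewrite (bigD1 b) //= e.
Qed.

Section ClassBound.
Variables (L : nat) (C : {set word q n}) (R E : {set 'I_n}).
Hypothesis C_ld : list_decodable_nat #|E| L C.
Hypothesis R_small : L * #|R| <= #|E| + L.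

Lemma sum_agreements_lt c (S : {set word q n}) :
  c \in C -> S \subset C -> c \notin S -> #|S| = L ->
  {in S, forall b : word q n, {in ~: (R :|: E), b =1 c}} ->
  \sum_(b in S) #|[set i in R | b i == c i]| < L.
Proof.
move=> cC SC cS SL agree; rewrite ltnNge; apply/negP => sum_ge.
pose f (b : word q n) := #|[set i in R | c i != b i]|.
have f_agr (b : word q n) : f b + #|[set i in R | b i == c i]| = #|R|.
  rewrite -(cardsID [set i | c i != b i] R).
  by congr (_ + _); apply: eq_card => i; rewrite !inE ?negbK 1?eq_sym andbC.
have sum_f : \sum_(b <- enum S) f b <= #|E|.
  have : \sum_(b in S) (f b + #|[set i in R | b i == c i]|) = L * #|R|.
    by rewrite (eq_bigr _ (fun b _ => f_agr b)) sum_nat_const SL.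
  rewrite big_split big_enum /= => sumS.
  by rewrite -(leq_add2r L) (leq_trans _ R_small) // -sumS leq_add2l.
have [v vc vS] := exists_center c sum_f.
have ball : c |: S \subset [set w in C | hamming v w <= #|E|].
  apply/subsetP => w; rewrite !inE => /predU1P[->|wS].
    have vc0 : [set i in ~: E | v i != c i] = set0.
      by apply/setP => i; rewrite !inE; apply/negP => /andP[iE]; rewrite vc ?inE ?eqxx.
    rewrite cC (hamming_split E) vc0 cards0 addn0.
    by apply/subset_leq_card/subsetP => i; rewrite inE => /andP[].
  rewrite (subsetP SC w wS) /= (hamming_split E).
  apply: leq_trans (vS w _); last by rewrite mem_enum.
  rewrite leq_add2l; apply/subset_leq_card/subsetP => i; rewrite !inE => /andP[iE vw].
  rewrite -(vc i) ?inE // vw andbT; apply: contraR vw => iR.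
  by rewrite vc ?inE // (agree w wS) ?inE ?negb_or ?iR ?iE.
have := leq_trans (subset_leq_card ball) (C_ld v).
by rewrite cardsU1 cS SL ltnn.
Qed.

Lemma sum_agreements_le (X : {set word q n}) c :
  X \subset C -> {in X &, forall b c : word q n, {in ~: (R :|: E), b =1 c}} ->
  L < #|X| -> c \in X ->
  \sum_(b in X :\ c) #|[set i in R | b i == c i]| < L.
Proof.
move=> XC agree XL cX; rewrite ltnNge; apply/negP => sum_ge.
have LXc : L <= #|X :\ c| by move: XL; rewrite (cardsD1 c X) cX.
have [S SXc [SL sumS]] := exists_subset_sum_ge LXc sum_ge.
have SX : S \subset X by apply: subset_trans SXc (subsetDl _ _).
suff: \sum_(b in S) #|[set i in R | b i == c i]| < L by rewrite ltnNge sumS.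
apply: sum_agreements_lt (subsetP XC c cX) (subset_trans SX XC) _ SL _.
  by apply/negP => /(subsetP SXc); rewrite !inE eqxx.
by move=> b bS; apply: agree => //; apply: (subsetP SX).
Qed.

Lemma class_card_bound (X : {set word q n}) :
  L <= q -> X \subset C -> {in X &, forall b c : word q n, {in ~: (R :|: E), b =1 c}} ->
  #|R| * #|X| <= #|R| * q + (L - 1) * #|X|.
Proof.
move=> Lq XC agree.
have [XL | LX] := leqP #|X| L.
  by apply: leq_trans (leq_addr _ _); rewrite leq_mul2l (leq_trans XL Lq) orbT.
have : \sum_(j in R) #|X| <=
       \sum_(j in R) (q + \sum_(c in X) \sum_(b in X :\ c) (b j == c j)).
  by apply: leq_sum => j _; apply: card_le_alphabet_collisions.
rewrite big_split !sum_nat_const /= => /leq_trans; apply; rewrite leq_add2l.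
rewrite exchange_big /= mulnC -sum_nat_const; apply: leq_sum => c cX.
rewrite exchange_big /=.
under eq_bigr do rewrite sum_nat_bool_card.
have := sum_agreements_le XC agree LX cX.
by case: (L) => // L'; rewrite subn1 ltnS.
Qed.

Lemma card_bound_by_classes :
  L <= q -> #|R| * #|C| <= #|R| * q ^ #|~: (R :|: E)|.+1 + (L - 1) * #|C|.
Proof.
move=> Lq; set P := ~: (R :|: E).
pose pre (c : word q n) : {ffun {i | i \in P} -> 'I_q} := [ffun i => c (val i)].
pose X p := [set c in C | pre c == p].
have cardC : #|C| = \sum_p #|X p|.
  rewrite -sum1_card (partition_big pre xpredT) //=.
  by apply: eq_bigr => p _; rewrite sum1dep_card.
have classes p : #|R| * #|X p| <= #|R| * q + (L - 1) * #|X p|.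
  apply: class_card_bound Lq _ _; first by apply/subsetP => c; rewrite inE => /andP[].
  move=> b c; rewrite !inE => /andP[_ /eqP bp] /andP[_ /eqP cp] i iP.
  by have /ffunP/(_ (exist _ i iP)) := etrans bp (esym cp); rewrite !ffunE.
rewrite {1}cardC big_distrr /=.
apply: leq_trans; first by apply: leq_sum => p _; apply: classes.
rewrite big_split sum_nat_const -big_distrr /= -cardC card_ffun card_sig card_ord.
have -> : #|[pred i in P]| = #|P| by apply: eq_card.
by rewrite leq_add2r expnS [q * _]mulnC mulnCA.
Qed.

End ClassBound.
End Words.

Lemma ratio_bound_of_class_bound (c Q h t L : nat) :
  h * c <= h * Q + (L - 1) * c -> t + 1 <= L * h -> 2 * L * L <= t + 1 ->
  c * (t + 1) <= Q * (t + 1 + 2 * L * L).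
Proof.
move=> classes tLh Lt; set h' := h - (L - 1).
have hL : L <= h by nia.
have h'c : h' * c <= h * Q by rewrite /h' mulnBl; lia.
have slack : (L - 1) * (t + 1) <= 2 * L * L * h' by rewrite /h'; nia.
rewrite -(@leq_pmul2l h'); last by rewrite /h'; nia.
apply: (@leq_trans (h * Q * (t + 1))); first by rewrite mulnA leq_mul2r h'c orbT.
nia.
Qed.

Theorem card_list_decodable_le (q n t L : nat) (C : {set word q n}) :
  0 < L <= q -> (L + 1) * t < L * n -> 2 * L * L <= t + 1 ->
  list_decodable_nat t L C ->
  #|C| * (t + 1) <= q ^ (n - (L + 1) * t %/ L) * (t + 1 + 2 * L * L).
Proof.
case/andP=> L0 Lq tn tL C_ld; set k := (L + 1) * t %/ L.
have Lk : L * k <= (L + 1) * t by rewrite [L * _]mulnC leq_divM.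
have kL : (L + 1) * t < L * k.+1 by rewrite [L * _]mulnC ltn_ceil.
have tk : t <= k by nia.
have kn : k < n by nia.
have [E _ Et] : exists2 E : {set 'I_n}, E \subset setT & #|E| = t.
  by apply: exists_subset_card; rewrite cardsT card_ord; lia.
have [R RE Rh] : exists2 R : {set 'I_n}, R \subset ~: E & #|R| = k.+1 - t.
  by apply: exists_subset_card; rewrite cardsCs setCK card_ord Et; lia.
have card_rest : #|~: (R :|: E)|.+1 = n - k.
  have RE0 : R :&: E = set0 by apply/disjoint_setI0; rewrite disjoints_subset.
  by rewrite cardsCs setCK card_ord cardsU RE0 cards0 Rh Et; lia.
have R_small : L * #|R| <= #|E| + L by rewrite Rh Et; nia.
rewrite -Et in C_ld; have := card_bound_by_classes C_ld R_small Lq.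
by rewrite card_rest Rh => /ratio_bound_of_class_bound; apply; nia.
Qed.

Lemma INR_expn (a b : nat) : INR (a ^ b) = (INR a ^ b)%R.
Proof. by elim: b => [|b IHb] //; rewrite expnS mult_INR IHb. Qed.

Lemma Int_part_INR_div (a d : nat) : 0 < d -> Int_part (INR a / INR d) = Z.of_nat (a %/ d).
Proof.
move=> d0; symmetry; apply: Int_part_spec; rewrite -INR_IZR_INZ.
have d0R : (0 < INR d)%R by apply: lt_0_INR; apply/ltP.
have /ltP/lt_INR rem_lt : a %% d < d by rewrite ltn_mod.
have a_eq : INR a = (INR (a %/ d) * INR d + INR (a %% d))%R.
  by rewrite {1}(divn_eq a d) -multE -plusE plus_INR mult_INR.
have frac : (0 <= INR (a %% d) / INR d < 1)%R.
  split; first by apply: Rle_mult_inv_pos => //; apply: pos_INR.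
  by apply: (Rmult_lt_reg_r (INR d)) => //; rewrite /Rdiv Rmult_assoc Rinv_l; lra.
have -> : (INR a / INR d = INR (a %/ d) + INR (a %% d) / INR d)%R.
  by rewrite a_eq; field; lra.
lra.
Qed.

Lemma Un_cv_div_affine (A a b : R) : (0 < a)%R -> Un_cv (fun n => A / (a * INR n + b))%R 0.
Proof.
move=> a0; have -> : 0%R = (A * 0)%R by rewrite Rmult_0_r.
apply: CV_mult; first by move=> e e0; exists 0%nat => m _; rewrite /R_dist Rminus_diag Rabs_R0.
apply: cv_infty_cv_0 => M; have [N MN] := INR_unbounded ((M - b) / a).
exists N => m /le_INR Nm; have : ((M - b) / a * a < INR m * a)%R by nra.
rewrite /Rdiv Rmult_assoc Rinv_l; lra.
Qed.

Lemma card_list_decodable_le_real (q n t L : nat) (r : R) (C : {set word q n}) :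
  0 < L <= q -> (0 < r < INR L / (INR L + 1))%R -> INR t = (r * INR n)%R ->
  2 * L * L <= t + 1 -> list_decodable r L C ->
  (INR #|C| <= (1 + 2 * INR L * INR L / (INR t + 1)) *
     powerRZ (INR q) (Z.of_nat n - Int_part ((INR L + 1) / INR L * r * INR n)))%R.
Proof.
move=> LLq [r0 rL] rt tL C_ld; have /andP[L0 _] := LLq.
have L0R : (0 < INR L)%R by apply: lt_0_INR; apply/ltP.
have t0 : (0 < INR t)%R by apply: lt_0_INR; apply/ltP; nia.
have n0 : (0 < INR n)%R by have := pos_INR n; nra.
have rL' : (r * (INR L + 1) < INR L)%R.
  apply: (Rmult_lt_reg_r (/ (INR L + 1))); first by apply: Rinv_0_lt_compat; lra.
  by rewrite Rmult_assoc Rinv_r; lra.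
have tn : (L + 1) * t < L * n.
  by apply/ltP/INR_lt; rewrite -!multE !mult_INR -plusE plus_INR rt /=; nra.
set k := (L + 1) * t %/ L.
have := card_list_decodable_le LLq tn tL (list_decodable_nat_radius rt C_ld).
rewrite -/k => /leP/le_INR; rewrite -!multE -!plusE !mult_INR !plus_INR !mult_INR /= => bound.
have -> : ((INR L + 1) / INR L * r * INR n = INR ((L + 1) * t) / INR L)%R.
  by rewrite -multE -plusE mult_INR plus_INR rt /=; field; lra.
rewrite Int_part_INR_div // -Nat2Z.inj_sub ?minusE -?pow_powerRZ -?INR_expn; last first.
  by apply/leP; rewrite -[n](mulKn n L0) leq_div2r // ltnW.
apply: (Rmult_le_reg_r (INR t + 1)); first lra.
set Q := INR (q ^ (n - k)).
have -> : ((1 + 2 * INR L * INR L / (INR t + 1)) * Q * (INR t + 1) =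
           Q * (INR t + 1 + 2 * INR L * INR L))%R by field; lra.
by apply: (Rle_trans _ _ _ bound); apply: Req_le; rewrite /Q; ring.
Qed.

Theorem corollary3p2 (L : nat) (r : R) :
  1 <= L -> (0 <= r)%R -> (r < INR L / (INR L + 1))%R ->
  exists (N : nat) (g : nat -> R),
    (forall n, 0 <= g n)%R /\ Un_cv g 0%R /\
    forall (q n : nat), maxn 2 L <= q -> N <= n ->
      (exists t : nat, INR t = (r * INR n)%R) ->
      forall C : {set word q n}, list_decodable r L C ->
        (INR #|C| <= (1 + g n) *
           powerRZ (INR q)
             (Z.of_nat n - Int_part ((INR L + 1) / INR L * r * INR n)))%R.
Proof.
move=> L1 r0 rL; have [-> | r_pos] : r = 0%R \/ (0 < r)%R by lra.
  exists 0, (fun _ => 0%R); split; first by move=> _; lra.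
  split; first by move=> e e0; exists 0 => m _; rewrite /R_dist Rminus_diag Rabs_R0.
  move=> q n _ _ _ C _; rewrite Rmult_0_r Rmult_0_l Rplus_0_r Rmult_1_l.
  rewrite (Int_part_INR 0) Z.sub_0_r -pow_powerRZ -INR_expn.
  by apply/le_INR/leP; rewrite (leq_trans (max_card _)) // card_ffun !card_ord.
pose A := (2 * INR L * INR L)%R.
have [N AN] := INR_unbounded (A / r).
exists N, (fun n => A / (r * INR n + 1))%R; split.
  by move=> n; apply: Rle_mult_inv_pos; have := pos_INR n; rewrite /A; nra.
split; first exact: Un_cv_div_affine.
move=> q n Lq Nn [t rt] C C_ld.
have tL : 2 * L * L <= t + 1.
  have /le_INR Nn' := elimT leP Nn.
  have : (A < INR t)%R.
    rewrite rt; apply: (Rlt_le_trans _ (r * INR N)); last by nra.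
    apply: (Rmult_lt_reg_r (/ r)); first exact: Rinv_0_lt_compat.
    by rewrite [(r * _)%R]Rmult_comm Rmult_assoc Rinv_r; lra.
  rewrite /A => At; apply/leP/INR_le.
  by rewrite -!multE -plusE !mult_INR plus_INR ?mult_INR /=; lra.
rewrite -rt; apply: card_list_decodable_le_real => //.
by rewrite L1 (leq_trans (leq_maxr 2 L)).
Qed.
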